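(* Fix $\alpha\in[\tfrac12,1)$. An ideal SAIT for $n$ keys with total number of accesses $m$ can be built in $O(m)$ time and uses $O(m^{\alpha/2}\cdot n + m^{\alpha})$ memory.
   Context: A Generic Self-Adjusting Tree (GSAT) with degree function $D$ for a set of integer keys with access counts $ac_i\ge1$ consists of $m=\sum_i ac_i$, an array of $k\le\lceil D(m)\rceil$ representative keys with their access counts, and $k+1$ child subtrees that are GSATs for the keys lying strictly before the first representative, strictly between consecutive representatives, and strictly after the last; every node stores at least one key (empty key sets give no node), so the tree has at most $n$ nodes. $m(T')$ is the total access count of keys in subtree $T'$. A GSAT is ideal if each child $T_j$ of the root satisfies $m(T_j)\le m/(D(m)+1)$ and each child is ideal. A SAIT (Self-Adjusting Interpolation Search Tree) is a GSAT with $D(m)=\sqrt m$ in which, additionally, each node whose subtree has total access count $m'$ stores an interpolation array $ID$ of size $\lceil m'^{\alpha}\rceil$, which is built in $O(m'^{\alpha})$ time after the node's representatives are chosen. Cost model for the rest of construction: given keys sorted with prefix sums of access counts, a node with subtree access count $m'$ costs $O(D(m'))$ time and memory plus $O(\log n)$ time per representative (binary search on prefix sums), besides recursive construction of its children. *)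

From Stdlib Require Import Reals Lra ZArith List Sorted.
Import ListNotations.
Open Scope R_scope.

(** A key with its access count. *)
Definition key := (Z * nat)%type.

Definition mass_list (L : list key) : nat := fold_right (fun p s => (snd p + s)%nat) 0%nat L.

Definition ceilR (x : R) : R := IZR (- Int_part (- x)).

(** Trees: [Tip] = empty subtree (no node); [Node reps ch] = a node storing the
    array [reps] of representative keys (with access counts) and [ch] children. *)
Inductive tree : Type :=
| Tip : tree
| Node : list key -> list tree -> tree.

Fixpoint interleave (cs : list (list key)) (rs : list key) : list key :=
  match cs, rs with
  | c :: cs', r :: rs' => c ++ r :: interleave cs' rs'
  | c :: _, [] => c
  | [], _ => rs
  end.

Fixpoint flatten (t : tree) : list key :=
  match t with
  | Tip => []
  | Node reps ch => interleave (map flatten ch) reps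
  end.

Definition mass (t : tree) : nat := mass_list (flatten t).
Definition nkeys (t : tree) : nat := length (flatten t).

Inductive gsat_ok (D : R -> R) : tree -> Prop :=
| gsat_tip : gsat_ok D Tip
| gsat_node (reps : list key) (ch : list tree) :
    reps <> [] ->
    length ch = S (length reps) ->
    INR (length reps) <= ceilR (D (INR (mass (Node reps ch)))) ->
    (forall c, In c ch -> gsat_ok D c) ->
    gsat_ok D (Node reps ch).

Definition valid_keys (L : list key) : Prop :=
  StronglySorted (fun a b => (fst a < fst b)%Z) L /\ Forall (fun p => (1 <= snd p)%nat) L.

(** [t] is a GSAT with degree function D for the key set L: since L is sorted
    and the in-order traversal of t is L, each child holds exactly the keys
    strictly before / between / after the representatives. *)
Definition is_gsat (D : R -> R) (t : tree) (L : list key) : Prop :=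
  gsat_ok D t /\ flatten t = L.

Inductive ideal (D : R -> R) : tree -> Prop :=
| ideal_tip : ideal D Tip
| ideal_node (reps : list key) (ch : list tree) :
    (forall c, In c ch ->
       ideal D c /\
       INR (mass c) <= INR (mass (Node reps ch)) / (D (INR (mass (Node reps ch))) + 1)) ->
    ideal D (Node reps ch).

Definition Dsait (x : R) : R := sqrt x.

Definition sumR (l : list R) : R := fold_right Rplus 0 l.

(** Construction-time charge (cost model, up to constant factors):
    per node with subtree access count m' and n' subtree keys:
    D(m') + k * (1 + ln n') [binary search on that node's range of prefix sums]
    + ceil(m'^alpha) [building the interpolation array ID]. *)
Fixpoint build_time (alpha : R) (t : tree) : R :=
  match t with
  | Tip => 0
  | Node reps ch =>
      let m' := INR (mass (Node reps ch)) in
      let n' := INR (nkeys (Node reps ch)) in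
      Dsait m' + INR (length reps) * (1 + ln n') + ceilR (Rpower m' alpha)
      + sumR (map (build_time alpha) ch)
  end.

(** Memory charge: O(D(m')) per node plus the ID array of size ceil(m'^alpha). *)
Fixpoint memory (alpha : R) (t : tree) : R :=
  match t with
  | Tip => 0
  | Node reps ch =>
      let m' := INR (mass (Node reps ch)) in
      Dsait m' + ceilR (Rpower m' alpha) + sumR (map (memory alpha) ch)
  end.

From Stdlib Require Import Reals Lra Lia List Permutation ZArith.
Import ListNotations.
Open Scope R_scope.

(** Let [L] be a key list of total access count (weight) [m].
    - Existence ([ideal_sait_exists]).  Cut [L] greedily from left to right
      into blocks of weight at most [B = m / (sqrt m + 1)], each closed by one
      representative key ([greedy_partition]).  Every closed block together
      with its representative weighs more than [B], so there are fewer than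
      [m / B = sqrt m + 1] representatives, i.e. at most [ceil (sqrt m)]
      ([root_split]); recursing on the blocks gives an ideal SAIT.
    - Time ([build_time_potential]).  A node of weight [m] costs at most
      [13 m^g] with [g = (1 + alpha) / 2] ([node_cost]), and by ideality its
      children weigh at most [sqrt m] ([ideal_child_le_sqrt]).  The potential
      [A m - m^g] bounds the construction time: a child of weight [mc]
      releases [mc^g >= mc (sqrt m)^(g-1)], in total [m^((1+g)/2) - O(1)],
      which pays for [14 m^g] once [A] is large ([power_domination]).
    - Memory ([memory_ideal]).  A SAIT of weight at most [M] occupies at most
      [3 M^alpha] per key ([memory_per_key]); apply this to the children of
      the root, of weight at most [sqrt m], and add the root's own cost. *)

(** Every key is accessed at least once; this is what lets weights control sizes. *)
Definition positive_counts (L : list key) : Prop := Forall (fun p => (1 <= snd p)%nat) L.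

Lemma mass_list_app (a b : list key) :
  mass_list (a ++ b) = (mass_list a + mass_list b)%nat.
Proof. induction a as [|x a IH]; simpl; [reflexivity | rewrite IH; lia]. Qed.

Lemma mass_list_perm (a b : list key) : Permutation a b -> mass_list a = mass_list b.
Proof. induction 1; simpl; lia. Qed.

Lemma length_le_mass_list (L : list key) : positive_counts L ->
  INR (length L) <= INR (mass_list L).
Proof. intros Hpos. apply le_INR. induction Hpos; simpl; lia. Qed.

Lemma length_nonempty {A : Type} (L : list A) : L <> [] -> 1 <= INR (length L).
Proof. intros Hne. apply (le_INR 1). destruct L; simpl; [congruence | lia]. Qed.

Lemma interleave_perm (rs : list key) : forall cs,
  length cs = S (length rs) ->
  Permutation (interleave cs rs) (concat cs ++ rs).
Proof.
  induction rs as [|r rs IH]; intros cs Hl.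
  - destruct cs as [|c [|c' cs]]; simpl in *; try lia.
    rewrite !app_nil_r. apply Permutation_refl.
  - destruct cs as [|c cs]; simpl in *; try lia.
    rewrite <- app_assoc. apply Permutation_app_head.
    eapply perm_trans; [apply perm_skip, IH; lia | apply Permutation_middle].
Qed.

Lemma interleave_extend_last (x : key) (c : list key) : forall cs rs,
  length cs = length rs ->
  interleave (cs ++ [c ++ [x]]) rs = interleave (cs ++ [c]) rs ++ [x].
Proof.
  induction cs as [|c0 cs IH]; intros rs Hl; destruct rs as [|r rs]; simpl in *; try lia.
  - reflexivity.
  - rewrite IH by lia. rewrite <- app_assoc. reflexivity.
Qed.

Lemma interleave_close_last (x : key) (c : list key) : forall cs rs,
  length cs = length rs ->
  interleave (cs ++ [c; []]) (rs ++ [x]) = interleave (cs ++ [c]) rs ++ [x].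
Proof.
  induction cs as [|c0 cs IH]; intros rs Hl; destruct rs as [|r rs]; simpl in *; try lia.
  - reflexivity.
  - rewrite IH by lia. rewrite <- app_assoc. reflexivity.
Qed.

(** Greedy left-to-right cut of [L] into blocks of weight at most [B]: a key
    joins the open block if it fits, and otherwise becomes a representative
    closing it.  Each closed block with its representative weighs more than
    [B], so [k] representatives account for more than [k * B] of the weight. *)
Lemma greedy_partition (B : R) (HB : 0 <= B) (L : list key) :
  exists cs c rs, length cs = length rs /\ interleave (cs ++ [c]) rs = L /\
    (forall d, In d (cs ++ [c]) -> INR (mass_list d) <= B) /\
    INR (length rs) * B + INR (mass_list c) <= INR (mass_list L) /\
    (rs <> [] -> INR (length rs) * B + INR (mass_list c) < INR (mass_list L)).
Proof.
  induction L as [|x L IH] using rev_ind.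
  { exists [], [], []. simpl. repeat split; try lra; [|congruence].
    intros d [<- | []]. simpl. lra. }
  destruct IH as (cs & c & rs & Hl & Hi & Hd & Hw & Hws).
  rewrite mass_list_app; simpl; rewrite Nat.add_0_r, plus_INR.
  destruct (Rle_dec (INR (mass_list c + snd x)) B) as [Hfit | Hover];
    rewrite plus_INR in *.
  - exists cs, (c ++ [x]), rs.
    rewrite mass_list_app; simpl; rewrite Nat.add_0_r, plus_INR.
    repeat split; [exact Hl | rewrite interleave_extend_last, Hi by exact Hl; reflexivity
                  | | lra | intros Hne; specialize (Hws Hne); lra].
    intros d Hd'; apply in_app_or in Hd' as [Hd' | [<- | []]].
    + apply Hd, in_or_app; auto.
    + rewrite mass_list_app; simpl; rewrite Nat.add_0_r, plus_INR. exact Hfit.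
  - exists (cs ++ [c]), [], (rs ++ [x]).
    rewrite !length_app, plus_INR; simpl.
    repeat split; [lia | | | lra | intros _; lra].
    + rewrite <- app_assoc; simpl. rewrite interleave_close_last, Hi by exact Hl.
      reflexivity.
    + intros d Hd'; rewrite <- app_assoc in Hd'.
      apply in_app_or in Hd' as [Hd' | [<- | [<- | []]]].
      * apply Hd, in_or_app; auto.
      * apply Hd, in_or_app; simpl; auto.
      * simpl; lra.
Qed.

Lemma ceilR_upper (x : R) : ceilR x < x + 1.
Proof. unfold ceilR. destruct (base_Int_part (- x)). rewrite opp_IZR. lra. Qed.

Lemma ceilR_lower (x : R) : x <= ceilR x.
Proof. unfold ceilR. destruct (base_Int_part (- x)). rewrite opp_IZR. lra. Qed.

Lemma INR_le_ceilR (k : nat) (x : R) : INR k < x + 1 -> INR k <= ceilR x.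
Proof.
  intros H. pose proof (ceilR_lower x). unfold ceilR in *.
  rewrite INR_IZR_INZ in *.
  assert (Hz : IZR (Z.of_nat k) < IZR (- Int_part (- x) + 1)) by (rewrite plus_IZR; lra).
  apply lt_IZR in Hz. apply IZR_le. lia.
Qed.

Lemma root_split (L : list key) : L <> [] -> positive_counts L ->
  let m := INR (mass_list L) in
  exists blocks rs, length blocks = S (length rs) /\ interleave blocks rs = L /\
    rs <> [] /\ INR (length rs) <= ceilR (Dsait m) /\
    forall d, In d blocks -> INR (mass_list d) <= m / (Dsait m + 1).
Proof.
  intros Hne Hpos m.
  assert (Hm1 : 1 <= m) by (pose proof (length_nonempty L Hne); pose proof (length_le_mass_list L Hpos) as Hw; fold m in Hw; lra).
  unfold Dsait; set (s := sqrt m).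
  assert (Hs : 0 < s) by (apply sqrt_lt_R0; lra).
  assert (Hss : s * s = m) by (apply sqrt_sqrt; lra).
  set (B := m / (s + 1)).
  assert (HB : 0 < B < m).
  { unfold B; split; [apply Rdiv_lt_0_compat; lra |].
    apply Rmult_lt_reg_r with (s + 1); [lra |]. field_simplify; nra. }
  destruct (greedy_partition B ltac:(lra) L) as (cs & c & rs & Hl & Hi & Hd & Hw & Hws).
  assert (Hrs : rs <> []).
  { intros ->. destruct cs; simpl in Hl; [| lia]. simpl in Hi; subst c.
    assert (HL : INR (mass_list L) <= B) by (apply Hd; simpl; auto). fold m in HL. lra. }
  exists (cs ++ [c]), rs. repeat split; auto.
  - rewrite length_app; simpl; lia.
  - apply INR_le_ceilR.
    specialize (Hws Hrs); fold m in Hws. pose proof (pos_INR (mass_list c)).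
    apply Rmult_lt_reg_r with B; [lra |].
    replace ((s + 1) * B) with m by (unfold B; field; lra). lra.
Qed.

Lemma trees_of_lists (P : tree -> Prop) (blocks : list (list key)) :
  (forall d, In d blocks -> exists t, P t /\ flatten t = d) ->
  exists ts, map flatten ts = blocks /\ forall t, In t ts -> P t.
Proof.
  induction blocks as [|d blocks IH]; intros H.
  - exists []. simpl; tauto.
  - destruct (H d (or_introl eq_refl)) as (t & Pt & Ft).
    destruct IH as (ts & E & Hts); [intros; apply H; simpl; auto |].
    exists (t :: ts). simpl. split; [congruence |]. intros t' [<- | Ht']; auto.
Qed.

Lemma length_in_concat {A : Type} (d : list A) (ds : list (list A)) :
  In d ds -> (length d <= length (concat ds))%nat.
Proof.
  induction ds as [|e ds IH]; simpl; [tauto |].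
  rewrite length_app. intros [-> | H]; [lia | specialize (IH H); lia].
Qed.

(** Existence: every key list with positive counts is the in-order content of
    an ideal SAIT, built by [root_split] recursively (induction on the number
    of keys; every block is shorter than the list since a representative is
    removed). *)
Lemma ideal_sait_exists (L : list key) : positive_counts L ->
  exists t, gsat_ok Dsait t /\ flatten t = L /\ ideal Dsait t.
Proof.
  remember (length L) as n eqn:HnL. revert L HnL.
  induction n as [n IH] using lt_wf_ind; intros L HnL Hpos.
  destruct L as [|x L'] eqn:EL; [exists Tip; repeat constructor |].
  rewrite <- EL in *.
  assert (HLne : L <> []) by (subst L; discriminate).
  destruct (root_split L HLne Hpos) as (blocks & rs & Hl & Hi & Hrs & Hk & Hd).
  set (m := INR (mass_list L)) in *.
  assert (Hperm : Permutation L (concat blocks ++ rs)) by (rewrite <- Hi; apply interleave_perm, Hl).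
  destruct (trees_of_lists (fun t => gsat_ok Dsait t /\ ideal Dsait t) blocks)
    as (ts & Ets & Pts).
  { intros d Hdin.
    assert (Hlt : (length d < n)%nat).
    { subst n. rewrite (Permutation_length Hperm), length_app.
      pose proof (length_in_concat d blocks Hdin).
      destruct rs; [congruence | simpl; lia]. }
    destruct (IH _ Hlt d eq_refl) as (t & Gt & Ft & It); [| exists t; auto].
    unfold positive_counts in *; rewrite Forall_forall in *.
    intros y Hy. apply Hpos, (Permutation_in _ (Permutation_sym Hperm)), in_or_app.
    left. apply in_concat. eauto. }
  assert (Hfl : flatten (Node rs ts) = L) by (simpl; rewrite Ets; exact Hi).
  assert (Hmass : INR (mass (Node rs ts)) = m) by (unfold mass; rewrite Hfl; reflexivity).
  exists (Node rs ts). repeat split; [constructor | exact Hfl | constructor].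
  - exact Hrs.
  - rewrite <- (length_map flatten), Ets. exact Hl.
  - rewrite Hmass. exact Hk.
  - intros t Ht; apply Pts, Ht.
  - intros t Ht. split; [apply Pts, Ht |]. rewrite Hmass.
    apply Hd. rewrite <- Ets. apply in_map, Ht.
Qed.

Lemma sumR_le {A : Type} (f g : A -> R) (l : list A) :
  (forall c, In c l -> f c <= g c) -> sumR (map f l) <= sumR (map g l).
Proof.
  induction l as [|a l IH]; simpl; intros H; [lra |].
  pose proof (H a (or_introl eq_refl)).
  assert (sumR (map f l) <= sumR (map g l)) by (apply IH; auto). lra.
Qed.

Lemma sumR_nonneg {A : Type} (f : A -> R) (l : list A) :
  (forall c, In c l -> 0 <= f c) -> 0 <= sumR (map f l).
Proof.
  induction l as [|a l IH]; simpl; intros H; [lra |].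
  pose proof (H a (or_introl eq_refl)). assert (0 <= sumR (map f l)) by (apply IH; auto). lra.
Qed.

Lemma sumR_ge_term {A : Type} (f : A -> R) (l : list A) (x : A) :
  (forall c, In c l -> 0 <= f c) -> In x l -> f x <= sumR (map f l).
Proof.
  induction l as [|a l IH]; simpl; intros H Hx; [tauto |].
  assert (0 <= sumR (map f l)) by (apply sumR_nonneg; auto).
  destruct Hx as [-> | Hx]; [lra |].
  pose proof (H a (or_introl eq_refl)). assert (f x <= sumR (map f l)) by (apply IH; auto). lra.
Qed.

Lemma sumR_scal {A : Type} (a : R) (g : A -> R) (l : list A) :
  sumR (map (fun c => a * g c) l) = a * sumR (map g l).
Proof. induction l as [|x l IH]; simpl; [ring | rewrite IH; ring]. Qed.

Lemma sumR_mass (ch : list tree) :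
  sumR (map (fun c => INR (mass c)) ch) = INR (mass_list (concat (map flatten ch))).
Proof.
  induction ch as [|c ch IH]; simpl; [reflexivity |].
  rewrite mass_list_app, plus_INR, IH. reflexivity.
Qed.

Lemma sumR_nkeys (ch : list tree) :
  sumR (map (fun c => INR (nkeys c)) ch) = INR (length (concat (map flatten ch))).
Proof.
  induction ch as [|c ch IH]; simpl; [reflexivity |].
  rewrite length_app, plus_INR, IH. reflexivity.
Qed.

Lemma node_mass (reps : list key) (ch : list tree) : length ch = S (length reps) ->
  INR (mass (Node reps ch)) = sumR (map (fun c => INR (mass c)) ch) + INR (mass_list reps).
Proof.
  intros Hl. unfold mass at 1. simpl flatten.
  rewrite (mass_list_perm _ _ (interleave_perm reps (map flatten ch) ltac:(rewrite length_map; exact Hl))).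
  rewrite mass_list_app, plus_INR, sumR_mass. reflexivity.
Qed.

Lemma node_nkeys (reps : list key) (ch : list tree) : length ch = S (length reps) ->
  INR (nkeys (Node reps ch)) = sumR (map (fun c => INR (nkeys c)) ch) + INR (length reps).
Proof.
  intros Hl. unfold nkeys at 1. simpl flatten.
  rewrite (Permutation_length (interleave_perm reps (map flatten ch) ltac:(rewrite length_map; exact Hl))).
  rewrite length_app, plus_INR, sumR_nkeys. reflexivity.
Qed.

Lemma node_counts (reps : list key) (ch : list tree) : length ch = S (length reps) ->
  positive_counts (flatten (Node reps ch)) ->
  positive_counts reps /\ forall c, In c ch -> positive_counts (flatten c).
Proof.
  intros Hl Hpos.
  pose proof (interleave_perm reps (map flatten ch) ltac:(rewrite length_map; exact Hl)) as Hp.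
  unfold positive_counts in *; rewrite Forall_forall in *.
  split; [| intros c Hc; rewrite Forall_forall]; intros y Hy;
    apply Hpos, (Permutation_in _ (Permutation_sym Hp)), in_or_app; auto.
  left. apply in_concat. exists (flatten c). split; [apply in_map |]; assumption.
Qed.

Lemma node_weights (reps : list key) (ch : list tree) :
  reps <> [] -> length ch = S (length reps) -> positive_counts (flatten (Node reps ch)) ->
  1 <= INR (length reps) /\ 1 <= INR (mass_list reps) /\
  1 <= INR (nkeys (Node reps ch)) <= INR (mass (Node reps ch)).
Proof.
  intros Hne Hl Hpos.
  destruct (node_counts reps ch Hl Hpos) as [Hreps _].
  pose proof (length_nonempty reps Hne).
  pose proof (length_le_mass_list reps Hreps).
  pose proof (length_le_mass_list _ Hpos) as Hkm; fold (nkeys (Node reps ch)) in Hkm.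
  pose proof (sumR_nonneg (fun c => INR (nkeys c)) ch (fun c _ => pos_INR _)).
  pose proof (node_nkeys reps ch Hl).
  unfold mass. lra.
Qed.

Lemma child_mass_le (reps : list key) (ch : list tree) (c : tree) :
  length ch = S (length reps) -> In c ch -> INR (mass c) <= INR (mass (Node reps ch)).
Proof.
  intros Hl Hc. rewrite (node_mass reps ch Hl).
  pose proof (sumR_ge_term (fun c => INR (mass c)) ch c (fun c _ => pos_INR _) Hc).
  pose proof (pos_INR (mass_list reps)). simpl in *. lra.
Qed.

Lemma ideal_child_le_sqrt (m mc : R) : 0 <= m -> mc <= m / (Dsait m + 1) -> mc <= sqrt m.
Proof.
  unfold Dsait. intros Hm Hmc.
  pose proof (sqrt_pos m). pose proof (sqrt_sqrt m Hm).
  apply Rle_trans with (m / (sqrt m + 1)); [exact Hmc |].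
  apply Rmult_le_reg_r with (sqrt m + 1); [lra |]. field_simplify; nra.
Qed.

Lemma Rpower_gt_0 (x y : R) : 0 < Rpower x y.
Proof. unfold Rpower. apply exp_pos. Qed.

Lemma Rpower_ge_1 (x e : R) : 1 <= x -> 0 <= e -> 1 <= Rpower x e.
Proof. intros. rewrite <- (Rpower_O x) by lra. apply Rle_Rpower; lra. Qed.

Lemma Rpower_base_1 (e : R) : Rpower 1 e = 1.
Proof. unfold Rpower. rewrite ln_1, Rmult_0_r. apply exp_0. Qed.

Lemma Rpower_antitone (a b e : R) : 0 < a <= b -> e <= 0 -> Rpower b e <= Rpower a e.
Proof.
  intros Hab He. replace e with (- - e) by ring. rewrite (Rpower_Ropp b (- e)), (Rpower_Ropp a (- e)).
  apply Rinv_le_contravar; [apply Rpower_gt_0 | apply Rle_Rpower_l; lra].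
Qed.

Lemma Rpower_sqrt_half (x e : R) : 0 < x -> Rpower (sqrt x) e = Rpower x (e / 2).
Proof. intros Hx. rewrite <- Rpower_sqrt, Rpower_mult by exact Hx. f_equal. field. Qed.

Lemma ln_le (a b : R) : 0 < a -> a <= b -> ln a <= ln b.
Proof. intros Ha [H | H]; [apply Rlt_le, ln_increasing; auto | subst; lra]. Qed.

Lemma ln_lt_self (y : R) : 0 < y -> ln y < y.
Proof.
  intros Hy. destruct (Req_dec (ln y) 0) as [E | E]; [lra |].
  pose proof (exp_ineq1 _ E) as Hexp. rewrite exp_ln in Hexp by exact Hy. lra.
Qed.

Lemma power_domination (a b c : R) : 0 <= a < b -> 0 < c ->
  exists K, 0 <= K /\ forall x, 1 <= x -> c * Rpower x a <= K + Rpower x b.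
Proof.
  intros Hab Hc.
  exists (c * Rpower c (a / (b - a))).
  split; [pose proof (Rpower_gt_0 c (a / (b - a))); nra |].
  intros x Hx.
  assert (Hxb : Rpower x b = Rpower x (b - a) * Rpower x a).
  { rewrite <- Rpower_plus. f_equal. ring. }
  pose proof (Rpower_gt_0 x a). pose proof (Rpower_gt_0 x b).
  destruct (Rle_dec c (Rpower x (b - a))) as [Hbig | Hsmall].
  - pose proof (Rpower_gt_0 c (a / (b - a))). nra.
  - assert (Hxa : Rpower x a = Rpower (Rpower x (b - a)) (a / (b - a))).
    { rewrite Rpower_mult. f_equal. field. lra. }
    assert (Rpower x a <= Rpower c (a / (b - a))).
    { rewrite Hxa. apply Rle_Rpower_l; [apply Rle_mult_inv_pos; lra |].
      split; [apply Rpower_gt_0 | lra]. }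
    nra.
Qed.

(** Memory of a SAIT of weight at most [M >= 1]: at most [3 M^alpha] per key,
    since every node stores a representative and uses [sqrt m + ceil (m^alpha)]. *)
Lemma memory_per_key (alpha : R) (Ha : 1/2 <= alpha) (t : tree) :
  gsat_ok Dsait t -> positive_counts (flatten t) -> forall M, 1 <= M -> INR (mass t) <= M ->
  memory alpha t <= 3 * Rpower M alpha * INR (nkeys t).
Proof.
  induction 1 as [|reps ch Hne Hl Hk Hch IH]; intros Hpos M HM Hmass.
  { simpl. unfold nkeys; simpl. lra. }
  destruct (node_weights reps ch Hne Hl Hpos) as (Hk1 & Hrm & Hn1 & Hnm).
  destruct (node_counts reps ch Hl Hpos) as [_ Hcpos].
  set (m := INR (mass (Node reps ch))) in *.
  set (Q := 3 * Rpower M alpha).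
  assert (Hsum : sumR (map (memory alpha) ch) <= Q * sumR (map (fun c => INR (nkeys c)) ch)).
  { rewrite <- sumR_scal. apply sumR_le. intros c Hc. apply IH; auto.
    pose proof (child_mass_le reps ch c Hl Hc) as Hc_le. fold m in Hc_le. lra. }
  assert (Hroot : sqrt m + ceilR (Rpower m alpha) <= Q).
  { pose proof (ceilR_upper (Rpower m alpha)).
    assert (sqrt m <= Rpower M alpha).
    { apply Rle_trans with (sqrt M); [apply sqrt_le_1_alt; lra |].
      rewrite <- Rpower_sqrt by lra. apply Rle_Rpower; lra. }
    assert (Rpower m alpha <= Rpower M alpha) by (apply Rle_Rpower_l; lra).
    pose proof (Rpower_ge_1 M alpha HM ltac:(lra)). unfold Q; lra. }
  simpl memory. fold m. unfold Dsait. rewrite (node_nkeys reps ch Hl).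
  assert (Q <= Q * INR (length reps)) by (unfold Q; pose proof (Rpower_gt_0 M alpha); nra).
  lra.
Qed.

(** Memory of an ideal SAIT of weight [m] with [n] keys: the root uses
    [sqrt m + ceil (m^alpha) <= 3 m^alpha], and each child weighs at most
    [sqrt m], hence occupies at most [3 (sqrt m)^alpha = 3 m^(alpha/2)] per key. *)
Lemma memory_ideal (alpha : R) (Ha : 1/2 <= alpha) (t : tree) :
  gsat_ok Dsait t -> ideal Dsait t -> positive_counts (flatten t) ->
  let m := INR (mass t) in
  memory alpha t <= 3 * (Rpower m (alpha / 2) * INR (nkeys t) + Rpower m alpha).
Proof.
  intros Hg Hi Hpos m.
  pose proof (Rpower_gt_0 m (alpha / 2)). pose proof (Rpower_gt_0 m alpha).
  destruct Hg as [|reps ch Hne Hl Hk Hch].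
  { simpl. assert (0 <= INR (nkeys Tip)) by apply pos_INR. nra. }
  inversion Hi as [|reps' ch' Hidc]; subst reps' ch'.
  destruct (node_weights reps ch Hne Hl Hpos) as (Hk1 & Hrm & Hn1 & Hnm).
  destruct (node_counts reps ch Hl Hpos) as [_ Hcpos].
  fold m in Hn1, Hnm, Hidc.
  set (n := INR (nkeys (Node reps ch))) in *.
  set (s := sqrt m).
  assert (Hs1 : 1 <= s) by (rewrite <- sqrt_1; apply sqrt_le_1_alt; lra).
  assert (Hsa : Rpower s alpha = Rpower m (alpha / 2)) by (apply Rpower_sqrt_half; lra).
  assert (Hsum : sumR (map (memory alpha) ch)
                 <= 3 * Rpower m (alpha / 2) * sumR (map (fun c => INR (nkeys c)) ch)).
  { rewrite <- sumR_scal, <- Hsa. apply sumR_le. intros c Hc.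
    destruct (Hidc c Hc) as [_ Hmc].
    apply memory_per_key; auto. apply ideal_child_le_sqrt; lra. }
  assert (Hkeys : sumR (map (fun c => INR (nkeys c)) ch) <= n).
  { pose proof (node_nkeys reps ch Hl) as Hn. fold n in Hn. lra. }
  assert (Hroot : sqrt m + ceilR (Rpower m alpha) <= 3 * Rpower m alpha).
  { pose proof (ceilR_upper (Rpower m alpha)).
    assert (sqrt m <= Rpower m alpha) by (rewrite <- Rpower_sqrt by lra; apply Rle_Rpower; lra).
    pose proof (Rpower_ge_1 m alpha ltac:(lra) ltac:(lra)). lra. }
  simpl memory. fold m. unfold Dsait.
  assert (Rpower m (alpha / 2) * sumR (map (fun c => INR (nkeys c)) ch)
          <= Rpower m (alpha / 2) * n) by (apply Rmult_le_compat_l; lra).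
  lra.
Qed.

(** Construction time of one node of weight [m] with [1 <= n <= m] keys and
    [k <= ceil (sqrt m)] representatives: [sqrt m + k (1 + ln n) + ceil (m^alpha)]
    is at most [13 m^g] for [g = (1 + alpha) / 2 >= 3/4] (note [ln m <= 4 m^(1/4)]). *)
Lemma node_cost (alpha m n k : R) : 1/2 <= alpha < 1 -> 1 <= m -> 1 <= n <= m ->
  0 <= k <= ceilR (sqrt m) ->
  sqrt m + k * (1 + ln n) + ceilR (Rpower m alpha) <= 13 * Rpower m ((1 + alpha) / 2).
Proof.
  intros Ha Hm Hn Hk.
  set (y := Rpower m (/ 4)). set (G := Rpower m ((1 + alpha) / 2)).
  assert (Hy1 : 1 <= y) by (apply Rpower_ge_1; lra).
  assert (Hsq : sqrt m = y * y).
  { unfold y. rewrite <- Rpower_plus, <- Rpower_sqrt by lra. f_equal. field. }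
  assert (Hy3 : y * y * y <= G).
  { unfold y, G. rewrite <- !Rpower_plus. apply Rle_Rpower; lra. }
  assert (HaG : Rpower m alpha <= G) by (unfold G; apply Rle_Rpower; lra).
  assert (Hln : 0 <= ln n <= 4 * y).
  { split; [rewrite <- ln_1; apply ln_le; lra |].
    apply Rle_trans with (ln m); [apply ln_le; lra |].
    assert (ln y = / 4 * ln m) by (unfold y; apply ln_Rpower).
    pose proof (ln_lt_self y ltac:(lra)). lra. }
  pose proof (ceilR_upper (sqrt m)). pose proof (ceilR_upper (Rpower m alpha)).
  assert (k * (1 + ln n) <= (y * y + 1) * (1 + 4 * y)) by (apply Rmult_le_compat; lra).
  assert (y <= y * y) by nra. assert (y * y <= y * y * y) by nra.
  nra.
Qed.

Section BuildTime.

Variable alpha : R.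
Hypothesis Halpha : 1/2 <= alpha < 1.

(** The exponent of the per-node cost bound [13 m^g]. *)
Let g := (1 + alpha) / 2.

(** [A] is large enough for the potential [A m - m^g] to pay for the root:
    the children of a node of weight [m] release [m^((1+g)/2) - O(1)]. *)
Variable A : R.
Hypothesis HA : forall x, 1 <= x -> 14 * Rpower x g <= (A - 1) + Rpower x ((1 + g) / 2).

(** A child of weight [mc <= s] releases at least [mc * s^(g-1)] of the
    potential term [mc^g = mc * mc^(g-1)]. *)
Lemma potential_release (mc s : R) : 0 <= mc <= s -> 0 < s ->
  mc * Rpower s (g - 1) <= mc * Rpower mc (g - 1).
Proof.
  intros Hmc Hs. destruct (Req_dec mc 0) as [-> | Hnz]; [lra |].
  apply Rmult_le_compat_l; [lra |]. apply Rpower_antitone; unfold g; lra.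
Qed.

(** Linear construction time: the potential [A m - m^g] bounds the
    construction time of every ideal SAIT of weight [m] (written [m * m^(g-1)]
    so that it vanishes on the empty tree). *)
Lemma build_time_potential (t : tree) :
  gsat_ok Dsait t -> ideal Dsait t -> positive_counts (flatten t) ->
  build_time alpha t <= A * INR (mass t) - INR (mass t) * Rpower (INR (mass t)) (g - 1).
Proof.
  induction 1 as [|reps ch Hne Hl Hk Hch IH]; intros Hi Hpos.
  { simpl. unfold mass; simpl. lra. }
  inversion Hi as [|reps' ch' Hidc]; subst reps' ch'.
  destruct (node_weights reps ch Hne Hl Hpos) as (Hk1 & Hrm & Hn1 & Hnm).
  destruct (node_counts reps ch Hl Hpos) as [_ Hcpos].
  pose proof (node_mass reps ch Hl) as Hmass.
  set (m := INR (mass (Node reps ch))) in *.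
  set (s := sqrt m). set (q := Rpower s (g - 1)).
  assert (Hs : 0 < s) by (apply sqrt_lt_R0; lra).
  assert (HA14 : 14 <= A) by (pose proof (HA 1 (Rle_refl 1)) as HA1; rewrite !Rpower_base_1 in HA1; lra).
  assert (Hq1 : q <= 1).
  { unfold q. apply Rle_trans with (Rpower 1 (g - 1)); [| rewrite Rpower_base_1; lra].
    apply Rpower_antitone; [| unfold g; lra].
    split; [lra | rewrite <- sqrt_1; apply sqrt_le_1_alt; lra]. }
  assert (Hchild : forall c, In c ch -> build_time alpha c <= (A - q) * INR (mass c)).
  { intros c Hc. destruct (Hidc c Hc) as [Hic Hmc].
    pose proof (ideal_child_le_sqrt m _ ltac:(lra) Hmc) as Hcs; fold s in Hcs.
    pose proof (potential_release (INR (mass c)) s ltac:(split; [apply pos_INR | lra]) Hs)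
      as Hrel; fold q in Hrel.
    specialize (IH c Hc Hic (Hcpos c Hc)). lra. }
  assert (Hsum : sumR (map (build_time alpha) ch)
                 <= (A - q) * sumR (map (fun c => INR (mass c)) ch)).
  { rewrite <- sumR_scal. apply sumR_le, Hchild. }
  assert (Hroot : Dsait m + INR (length reps) * (1 + ln (INR (nkeys (Node reps ch))))
                  + ceilR (Rpower m alpha) <= 13 * Rpower m g).
  { apply node_cost; [exact Halpha | lra | split; assumption | split; [lra | exact Hk]]. }
  assert (Hmg : m * Rpower m (g - 1) = Rpower m g).
  { rewrite <- (Rpower_1 m) at 1 by lra. rewrite <- Rpower_plus. f_equal. ring. }
  assert (Hqm : q * m = Rpower m ((1 + g) / 2)).
  { unfold q, s. rewrite Rpower_sqrt_half by lra.
    rewrite <- (Rpower_1 m) at 2 by lra. rewrite <- Rpower_plus. f_equal. field. }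
  pose proof (HA m ltac:(lra)).
  assert ((A - q) * sumR (map (fun c => INR (mass c)) ch) <= (A - q) * (m - 1))
    by (apply Rmult_le_compat_l; lra).
  simpl build_time. fold m. rewrite Hmg. nra.
Qed.

End BuildTime.

(** Main theorem, with [C = K + 3] where [K] is the domination constant of
    [14 m^g] by [m^((1+g)/2)]: the tree of [ideal_sait_exists] satisfies the
    time bound by [build_time_potential] (with [A = K + 1]) and the memory
    bound by [memory_ideal]. *)
Theorem theorem5 (alpha : R) (Halpha : 1/2 <= alpha < 1) :
  exists C : R, 0 < C /\
    forall L : list key, valid_keys L ->
      let m := INR (mass_list L) in
      let n := INR (length L) in
      exists t : tree,
        is_gsat Dsait t L /\ ideal Dsait t /\
        build_time alpha t <= C * m /\
        memory alpha t <= C * (Rpower m (alpha / 2) * n + Rpower m alpha).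
Proof.
  set (g := (1 + alpha) / 2).
  destruct (power_domination g ((1 + g) / 2) 14) as (K & HK0 & HK); [unfold g; lra | lra |].
  exists (K + 3). split; [lra |].
  intros L [_ Hpos] m n.
  destruct (ideal_sait_exists L Hpos) as (t & Hg & Hf & Hi).
  assert (Htpos : positive_counts (flatten t)) by (rewrite Hf; exact Hpos).
  assert (Hmt : INR (mass t) = m) by (unfold mass; rewrite Hf; reflexivity).
  assert (Hnt : INR (nkeys t) = n) by (unfold nkeys; rewrite Hf; reflexivity).
  exists t. split; [split; assumption |]. split; [exact Hi |].
  assert (Hm0 : 0 <= m) by apply pos_INR.
  assert (Hn0 : 0 <= n) by apply pos_INR.
  split.
  - pose proof (build_time_potential alpha Halpha (K + 1)
                 ltac:(intros x Hx; replace (K + 1 - 1) with K by ring; apply HK, Hx) t Hg Hi Htpos) as Hb.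
    rewrite Hmt in Hb. pose proof (Rpower_gt_0 m ((1 + alpha) / 2 - 1)). nra.
  - pose proof (memory_ideal alpha ltac:(lra) t Hg Hi Htpos) as Hmem.
    cbv zeta in Hmem. rewrite Hmt, Hnt in Hmem.
    assert (Hsz : 0 <= Rpower m (alpha / 2) * n + Rpower m alpha).
    { pose proof (Rpower_gt_0 m (alpha / 2)). pose proof (Rpower_gt_0 m alpha). nra. }
    pose proof (Rmult_le_pos K _ HK0 Hsz). lra.
Qed.
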